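(* The map $c\mapsto G(c)$ from $\mathbb{R}^m$ to the space of convex bodies of $\mathbb{R}^m$ (with the Hausdorff distance) is continuous. Moreover, for every $c\in\mathbb{R}^m\setminus\{0\}$, the map $t\mapsto G(tc)$ is strictly increasing with respect to inclusion on $t>0$.
   Context: For a convex body $K\subset\mathbb{R}^m$ its support function is $h_K(u)=\sup\{\langle u,x\rangle: x\in K\}$, and the Hausdorff distance between convex bodies is $d(K,L)=\sup_{\|u\|=1}|h_K(u)-h_L(u)|$. For an integrable random vector $X\in\mathbb{R}^m$, the Vitale zonoid $\mathbb{E}\underline{X}$ is the convex body with support function $h_{\mathbb{E}\underline{X}}(u)=\frac12\mathbb{E}|\langle u,X\rangle|$. For $c\in\mathbb{R}^m$, $G(c):=\mathbb{E}\underline{c+\xi}$ where $\xi\in\mathbb{R}^m$ is a standard Gaussian vector. *)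

From HB Require Import structures.
From mathcomp Require Import all_boot all_order all_algebra.
From mathcomp Require Import all_classical all_reals all_analysis.
Set Implicit Arguments. Unset Strict Implicit. Unset Printing Implicit Defensive.
Import Order.TTheory GRing.Theory Num.Theory.
Local Open Scope classical_set_scope.
Local Open Scope ring_scope.

Section defs.
Context {R : realType}.

Definition dotv (m : nat) (u x : 'rV[R]_m) : R := \sum_(i < m) u 0 i * x 0 i.
Definition enorm (m : nat) (u : 'rV[R]_m) : R := Num.sqrt (dotv u u).

Definition support_fun (m : nat) (K : set 'rV[R]_m) (u : 'rV[R]_m) : \bar R :=
  ereal_sup [set (dotv u x)%:E | x in K].

Definition hausdorff_dist (m : nat) (K L : set 'rV[R]_m) : \bar R :=
  ereal_sup [set `|(support_fun K u - support_fun L u)%E|%E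
            | u in [set u | enorm u = 1]].

(* Vitale zonoid E[X] of a random vector X : the convex body whose support
   function is h(u) = 1/2 E|<u,X>|, i.e. { x | forall u, <u,x> <= h(u) } *)
Definition vitale_support (d : measure_display) (T : measurableType d)
    (P : probability T R) (m : nat) (X : T -> 'rV[R]_m) (u : 'rV[R]_m) : \bar R :=
  ((2%:R^-1)%:E * \int[P]_w (`|dotv u (X w)|)%:E)%E.

Definition vitale_zonoid (d : measure_display) (T : measurableType d)
    (P : probability T R) (m : nat) (X : T -> 'rV[R]_m) : set 'rV[R]_m :=
  [set x | forall u, ((dotv u x)%:E <= vitale_support P X u)%E].

Definition std_gaussian_vector (d : measure_display) (T : measurableType d)
    (P : probability T R) (m : nat) (xi : 'I_m -> T -> R) : Prop :=
  [/\ (forall i, measurable_fun setT (xi i)),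
      (forall i (A : set R), measurable A ->
          P (xi i @^-1` A) = normal_prob 0 1 A)
    & (forall A : 'I_m -> set R, (forall i, measurable (A i)) ->
          fine (P (\bigcap_(i in [set: 'I_m]) (xi i @^-1` A i)))
          = \prod_(i < m) fine (P (xi i @^-1` A i)))].

Definition Gzon (d : measure_display) (T : measurableType d)
    (P : probability T R) (m : nat) (xi : 'I_m -> T -> R) (c : 'rV[R]_m)
    : set 'rV[R]_m :=
  vitale_zonoid P (fun w => c + \row_(i < m) xi i w).

End defs.

From HB Require Import structures.
From mathcomp Require Import all_boot all_order all_algebra.
From mathcomp Require Import all_classical all_reals all_analysis.
From mathcomp Require Import measurable_realfun ring lra.
Import Order.TTheory GRing.Theory Num.Theory.
Set Implicit Arguments. Unset Strict Implicit. Unset Printing Implicit Defensive.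

Local Open Scope classical_set_scope.
Local Open Scope ring_scope.

(* The support function of G(c) in direction u is phi_u(<u,c>)/2, where
   phi_u(b) = E|b + <u,xi>|; it is attained at the point E[(c + xi) sg<u,c + xi>]/2
   of G(c).  Each phi_u is 1-Lipschitz, which gives continuity.  Since xi and -xi
   have the same law, phi_u is even; being convex, it is then nondecreasing in |b|,
   whence G(sc) is contained in G(tc).  For strictness, on the event that all
   |xi_i| are small, which has positive probability, the convexity inequality
   |l q + z| <= (1+l)/2 |q + z| + (1-l)/2 |-q + z| is strict by a fixed margin,
   so the supporting point of G(tc) in direction c lies outside G(sc). *)

Section dotv.
Context {R : realType} {m : nat}.
Implicit Types (u x y : 'rV[R]_m).

Lemma dotvDr u x y : dotv u (x + y) = dotv u x + dotv u y.
Proof. by rewrite /dotv -big_split; apply: eq_bigr => i _; rewrite mxE mulrDr. Qed.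

Lemma dotvZr u (a : R) x : dotv u (a *: x) = a * dotv u x.
Proof. by rewrite /dotv mulr_sumr; apply: eq_bigr => i _; rewrite mxE mulrCA. Qed.

Lemma dotvNr u x : dotv u (- x) = - dotv u x.
Proof. by rewrite -scaleN1r dotvZr mulN1r. Qed.

Lemma dotvBr u x y : dotv u (x - y) = dotv u x - dotv u y.
Proof. by rewrite dotvDr dotvNr. Qed.

Lemma dotvv_gt0 u : u != 0 -> 0 < dotv u u.
Proof.
move=> u0; have [i ui] : exists i, u 0 i != 0.
  apply/existsP; apply: contraNT u0 => /existsPn u0; apply/eqP/matrixP => a b.
  by rewrite ord1 mxE; apply/eqP; move: (u0 b); rewrite negbK.
rewrite /dotv (bigD1 i) //= ltr_wpDr //; last by rewrite -expr2 exprn_even_gt0.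
by rewrite sumr_ge0 // => j _; rewrite -expr2 sqr_ge0.
Qed.

Lemma normr_coord_le_enorm u i : `|u 0 i| <= enorm u.
Proof.
rewrite /enorm -(sqrtr_sqr (u 0 i)) ler_sqrt; last first.
  by rewrite sumr_ge0 // => j _; rewrite -expr2 sqr_ge0.
rewrite /dotv (bigD1 i) //= -expr2 lerDl sumr_ge0 // => j _.
by rewrite -expr2 sqr_ge0.
Qed.

(* A crude substitute for Cauchy-Schwarz, which is all that continuity needs. *)
Lemma normr_dotv_le u x : `|dotv u x| <= m%:R * (enorm u * enorm x).
Proof.
rewrite /dotv -[m in m%:R]card_ord -sum1_card natr_sum mulr_suml.
apply: le_trans (ler_norm_sum _ _ _) _; apply: ler_sum => i _.
by rewrite mul1r normrM ler_pM ?normr_coord_le_enorm.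
Qed.

Lemma normr_dotv_le_sum u x (e : R) : (forall i, `|x 0 i| <= e) ->
  `|dotv u x| <= (\sum_(i < m) `|u 0 i|) * e.
Proof.
move=> xe; rewrite mulr_suml; apply: le_trans (ler_norm_sum _ _ _) _.
by apply: ler_sum => i _; rewrite normrM ler_wpM2l.
Qed.

End dotv.

(* If |z| <= l q, the convexity gap below equals (1 - l) (q - z) >= (1 - l)^2 q. *)
Lemma abs_convex_gap {R : realFieldType} (l q z : R) (b : bool) :
  0 <= l <= 1 -> (b -> `|z| <= l * q) ->
  `|l * q + z| + (1 - l) ^+ 2 * q * b%:R <=
    (1 + l) / 2 * `|q + z| + (1 - l) / 2 * `|- q + z|.
Proof.
move=> /andP[l0 l1]; case: b => [/(_ erefl) hz|_]; last first.
  rewrite mulr0 addr0.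
  have -> : l * q + z = (1 + l) / 2 * (q + z) + (1 - l) / 2 * (- q + z) by field.
  apply: le_trans (ler_normD _ _) _.
  have wp : 0 <= (1 + l) / 2 by rewrite divr_ge0 //; lra.
  have wm : 0 <= (1 - l) / 2 by rewrite divr_ge0 //; lra.
  by rewrite (normrM ((1 + l) / 2)) (normrM ((1 - l) / 2)) (ger0_norm wp) (ger0_norm wm).
move: hz; rewrite ler_norml => /andP[zl zr].
have qz_le : q + z <= `|q + z| := ler_norm _.
have qNz_le : q - z <= `|- q + z| by rewrite -normrN opprD opprK ler_norm.
have gap : 0 <= (1 - l) * (l * q - z) by apply: mulr_ge0; lra.
rewrite mulr1 ger0_norm; last lra.
have : 0 <= (1 + l) / 2 * (`|q + z| - (q + z)) + (1 - l) / 2 * (`|- q + z| - (q - z)).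
  by apply: addr_ge0; apply: mulr_ge0; rewrite ?divr_ge0 //; lra.
nra.
Qed.

Lemma sgr_nondecreasing {R : realDomainType} : nondecreasing_fun (@Num.sg R).
Proof.
move=> x y; have [x0|x0|->] := ltrgt0P x => xy.
- by rewrite !gtr0_sg // (lt_le_trans x0 xy).
- rewrite (ltr0_sg x0); have [y0|y0|->] := ltrgt0P y;
    rewrite ?(gtr0_sg y0) ?(ltr0_sg y0) ?sgr0; lra.
- by rewrite sgr0 sgr_ge0.
Qed.

Section real_integrable.
Context {d : measure_display} {T : measurableType d} {R : realType}.
Variable P : probability T R.
Local Notation integrableR f := (P.-integrable setT (EFin \o f)).
Implicit Types f g : T -> R.

Lemma integrableR_cst (k : R) : integrableR (fun=> k).
Proof. exact: finite_measure_integrable_cst. Qed.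

Lemma integrableR_add f g : integrableR f -> integrableR g ->
  integrableR (fun w => f w + g w).
Proof. by move=> fi gi; apply: eq_integrable (integrableD _ fi gi). Qed.

Lemma integrableR_scale (k : R) f : integrableR f -> integrableR (fun w => k * f w).
Proof. by move=> fi; apply: eq_integrable (integrableZl _ k fi). Qed.

Lemma integrableR_norm f : integrableR f -> integrableR (fun w => `|f w|).
Proof. by move=> fi; apply: eq_integrable (integrable_abse fi). Qed.

Lemma integrableR_sum (I : Type) (s : seq I) (F : I -> T -> R) :
  (forall i, integrableR (F i)) -> integrableR (fun w => \sum_(i <- s) F i w).
Proof.
move=> Fi; elim: s => [|i s IH].
  by apply: eq_integrable (integrableR_cst 0) => // w _ /=; rewrite big_nil.
by apply: eq_integrable (integrableR_add (Fi i) IH) => // w _ /=; rewrite big_cons.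
Qed.

Lemma integrableR_mul_bounded f g : integrableR f -> measurable_fun setT g ->
  (forall w, `|g w| <= 1) -> integrableR (fun w => f w * g w).
Proof.
move=> fi mg g1; have gb : [bounded g w | w in setT].
  by exists 1; split => // M M1 w _; exact: le_trans (g1 w) (ltW M1).
exact: eq_integrable (integrableMl _ fi mg gb).
Qed.

Lemma Rintegral_sum (I : Type) (s : seq I) (F : I -> T -> R) :
  (forall i, integrableR (F i)) ->
  \int[P]_w (\sum_(i <- s) F i w) = \sum_(i <- s) \int[P]_w F i w.
Proof.
move=> Fi; elim: s => [|i s IH].
  under eq_Rintegral do rewrite big_nil.
  by rewrite big_nil Rintegral_cst // mul0r.
under eq_Rintegral do rewrite big_cons.
by rewrite RintegralD // ?IH ?big_cons //; exact: integrableR_sum.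
Qed.

Lemma Rintegral_cst_prob (k : R) : \int[P]_w k = k.
Proof. by rewrite Rintegral_cst //= probability_setT mulr1. Qed.

Lemma Rintegral_indic (A : set T) : measurable A -> \int[P]_w (\1_A w : R) = fine (P A).
Proof. by move=> mA; rewrite /Rintegral integral_indic // setIT. Qed.

Lemma integrableR_indic (A : set T) : measurable A -> integrableR (\1_A : T -> R).
Proof.
move=> mA; have indic1 w : `|(\1_A w : R)| <= 1.
  by rewrite indicE; case: (_ \in _); rewrite ?normr0 ?normr1.
have mi : measurable_fun setT (\1_A : T -> R) by exact: measurable_indic.
have := integrableR_mul_bounded (integrableR_cst 1) mi indic1.
by apply: eq_integrable => // w _ /=; rewrite mul1r.
Qed.

End real_integrable.

Section mean_abs_shift.
Context {d : measure_display} {T : measurableType d} {R : realType}.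
Variables (P : probability T R) (Y : T -> R).
Hypothesis intY : P.-integrable setT (EFin \o Y).

Definition mean_abs_shift (b : R) : R := \int[P]_w `|b + Y w|.
Local Notation M := mean_abs_shift.

Lemma integrableR_norm_shift b : P.-integrable setT (EFin \o fun w => `|b + Y w|).
Proof. exact/integrableR_norm/integrableR_add/intY/integrableR_cst. Qed.

Lemma mean_abs_shift_lipschitz b b' : `|M b' - M b| <= `|b' - b|.
Proof.
suff le_shift a a' : M a' <= M a + `|a' - a|.
  have := le_shift b b'; have := le_shift b' b; rewrite distrC => h1 h2.
  by rewrite ler_norml; apply/andP; split; lra.
have i1 := integrableR_norm_shift a; have i2 := integrableR_cst P `|a' - a|.
rewrite /M -[X in _ + X](Rintegral_cst_prob P) -RintegralD //.
apply: le_Rintegral => //; first exact: integrableR_norm_shift.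
  exact: integrableR_add.
move=> w _; rewrite [a' + _](_ : _ = a + Y w + (a' - a)) ?ler_normD //.
by rewrite addrAC addrCA subrr addr0 addrC.
Qed.

Lemma mean_abs_shift_convex_gap (l q : R) (A : set T) :
  0 <= l <= 1 -> measurable A -> (forall w, A w -> `|Y w| <= l * q) ->
  M (l * q) + (1 - l) ^+ 2 * q * fine (P A) <=
    (1 + l) / 2 * M q + (1 - l) / 2 * M (- q).
Proof.
move=> l01 mA YA.
have iA := integrableR_indic P mA.
have [iq iNq] := (integrableR_norm_shift q, integrableR_norm_shift (- q)).
have ilq := integrableR_norm_shift (l * q).
have iA' := integrableR_scale ((1 - l) ^+ 2 * q) iA.
have iq' := integrableR_scale ((1 + l) / 2) iq.
have iNq' := integrableR_scale ((1 - l) / 2) iNq.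
rewrite /M -Rintegral_indic // -!RintegralZl // -!RintegralD //.
apply: le_Rintegral => //.
- exact: integrableR_add.
- exact: integrableR_add.
move=> w _; rewrite indicE; apply: abs_convex_gap => // /set_mem.
exact: YA.
Qed.

End mean_abs_shift.

Section vitale_zonoid.
Context {d : measure_display} {T : measurableType d} {R : realType}.
Variables (P : probability T R) (m : nat) (X : T -> 'rV[R]_m).
Hypothesis intX : forall i, P.-integrable setT (EFin \o fun w => X w 0 i).

Lemma integrableR_dotv u : P.-integrable setT (EFin \o fun w => dotv u (X w)).
Proof. by apply: integrableR_sum => i; apply: integrableR_scale. Qed.

Lemma vitale_supportE u :
  vitale_support P X u = (2^-1 * \int[P]_w `|dotv u (X w)|)%:E.
Proof.
rewrite /vitale_support EFinM /Rintegral fineK //.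
exact/integrable_fin_num/integrableR_norm/integrableR_dotv.
Qed.

Lemma vitale_zonoid_supporting_point u : exists2 x,
  vitale_zonoid P X x & dotv u x = 2^-1 * \int[P]_w `|dotv u (X w)|.
Proof.
pose s w := Num.sg (dotv u (X w)).
have ms : measurable_fun setT s.
  apply: measurableT_comp; first exact: nondecreasing_measurable sgr_nondecreasing.
  exact/measurable_EFinP/(measurable_int P)/integrableR_dotv.
have s1 w : `|s w| <= 1 by rewrite normr_sg; case: (_ != 0).
pose x := \row_j (2^-1 * \int[P]_w (X w 0 j * s w)).
have dotv_x v : dotv v x = 2^-1 * \int[P]_w (dotv v (X w) * s w).
  have iv j : P.-integrable setT (EFin \o fun w => v 0 j * (X w 0 j * s w)).
    exact/integrableR_scale/integrableR_mul_bounded.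
  transitivity (2^-1 * \sum_(j < m) \int[P]_w (v 0 j * (X w 0 j * s w))).
    rewrite /dotv mulr_sumr; apply: eq_bigr => j _.
    by rewrite mxE mulrCA RintegralZl //; exact: integrableR_mul_bounded.
  rewrite -Rintegral_sum //; congr (_ * _); apply: eq_Rintegral => w _.
  by rewrite /dotv mulr_suml; apply: eq_bigr => j _; rewrite mulrA.
exists x => [v|]; rewrite dotv_x; last first.
  congr (_ * _); apply: eq_Rintegral => w _.
  by rewrite mulrC -normrEsg.
rewrite vitale_supportE lee_fin ler_wpM2l // le_Rintegral //.
- exact: integrableR_mul_bounded (integrableR_dotv v) ms s1.
- exact/integrableR_norm/integrableR_dotv.
move=> w _; apply: le_trans (ler_norm _) _.
by rewrite normrM ler_piMr.
Qed.

Lemma support_fun_vitale_zonoid u :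
  support_fun (vitale_zonoid P X) u = vitale_support P X u.
Proof.
apply/eqP; rewrite eq_le; apply/andP; split.
  by apply: ge_ereal_sup => _ [x Kx <-]; exact: Kx.
have [x Kx ux] := vitale_zonoid_supporting_point u.
by rewrite vitale_supportE -ux; apply: ereal_sup_ubound; exists x.
Qed.

End vitale_zonoid.

Section normal_distribution.
Context {R : realType}.
Local Notation mu := (@lebesgue_measure R).

Lemma ge0_integral_normal_prob (m s : R) (f : R -> \bar R) :
  measurable_fun setT f -> (forall x, (0 <= f x)%E) ->
  (\int[normal_prob m s]_x f x = \int[mu]_x (f x * (normal_pdf m s x)%:E))%E.
Proof.
move=> mf f0; have nd := normal_prob_dominates m s.
rewrite -(Radon_Nikodym_SigmaFinite.change_of_variables nd f0 measurableT mf).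
have mRN := measurable_int _ (Radon_Nikodym_SigmaFinite.f_integrable nd).
have mpdf : measurable_fun setT (fun x => (normal_pdf m s x)%:E).
  by apply/measurable_EFinP; exact: measurable_normal_pdf.
have pdf_RN : ae_eq mu setT (fun x => (normal_pdf m s x)%:E)
    (Radon_Nikodym_SigmaFinite.f (normal_prob m s) mu).
  apply: integral_ae_eq => //; first exact: integrable_normal_pdf.
  by move=> E _ mE; rewrite -Radon_Nikodym_SigmaFinite.f_integral.
apply: ae_eq_integral => //; try exact: emeasurable_funM.
exact/ae_eq_sym/ae_eqe_mul2l.
Qed.

Lemma normal_pdf0E (s x : R) : s != 0 ->
  normal_pdf 0 s x = normal_peak s * expR (- x ^+ 2 / (s ^+ 2 *+ 2)).
Proof. by move=> s0; rewrite /normal_pdf (negbTE s0) /normal_fun subr0. Qed.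

Lemma normal_pdf0N (s x : R) : s != 0 -> normal_pdf 0 s (- x) = normal_pdf 0 s x.
Proof. by move=> s0; rewrite !normal_pdf0E // sqrrN. Qed.

Lemma normal_prob0N (s : R) (A : set R) : s != 0 -> measurable A ->
  normal_prob 0 s [set x | A (- x)] = normal_prob 0 s A.
Proof.
move=> s0 mA; pose opp : R -> measurableTypeR R := -%R.
have mopp : measurable_fun setT opp by exact: oppr_measurable.
have mpdf : measurable_fun setT (fun x => (normal_pdf 0 s x)%:E).
  by apply/measurable_EFinP; exact: measurable_normal_pdf.
rewrite /normal_prob -[[set x | A (- x)]]/(opp @^-1` A).
transitivity (\int[mu]_(x in opp @^-1` A)
    ((fun y => (normal_pdf 0 s y)%:E) \o opp) x)%E.
  by apply: eq_integral => x _ /=; rewrite normal_pdf0N.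
rewrite -ge0_integral_pushforward //.
- by apply: eq_measure_integral => B mB _; exact: lebesgue_measureN.
- exact: measurable_funTS.
- by move=> y _; rewrite lee_fin normal_pdf_ge0.
Qed.

Lemma normal_prob01_itv_gt0 (e : R) : 0 < e -> (0 < normal_prob 0 1 `](- e)%R, e[)%E.
Proof.
move=> e0; have s0 : (1 : R) != 0 := oner_neq0 R; rewrite /normal_prob.
pose c := normal_peak 1 * expR (- e ^+ 2 / (1 ^+ 2 *+ 2)).
have c0 : 0 < c by rewrite mulr_gt0 ?expR_gt0 ?normal_peak_gt0.
apply: (@lt_le_trans _ _ (\int[mu]_(x in `](- e)%R, e[) c%:E))%E.
  rewrite integral_cst //= lebesgue_measure_itv /= lte_fin.
  have ee : - e < e by lra.
  by rewrite ee opprK -EFinD -EFinM lte_fin; apply: mulr_gt0 => //; lra.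
apply: ge0_le_integral => //.
- by move=> x _; rewrite lee_fin ltW.
- by apply/measurable_EFinP/measurable_funTS; exact: measurable_normal_pdf.
move=> x; rewrite /= in_itv /= => /andP[ex xe].
rewrite lee_fin normal_pdf0E // ler_wpM2l ?normal_peak_ge0 // ler_expR.
by rewrite !mulNr lerN2 ler_wpM2r ?invr_ge0 // !expr2; nra.
Qed.

Lemma normr_mul_expR_sqr_le (x : R) :
  `|x| * expR (- x ^+ 2 / 2) <= expR (- x ^+ 2 / 4).
Proof.
pose e := expR (x ^+ 2 / 4); have e0 : 0 < e := expR_gt0 _.
have xe : `|x| <= e.
  apply: le_trans (expR_ge1Dx _).
  have := sqr_ge0 (`|x| - 2); rewrite -[x ^+ 2]real_normK ?num_real // !expr2; nra.
have -> : - x ^+ 2 / 2 = - (x ^+ 2 / 4) + - (x ^+ 2 / 4) by field.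
rewrite expRD mulNr expRN -/e mulrA -[X in _ <= X]mul1r ler_pM2r ?invr_gt0 //.
by rewrite ler_pdivrMr // mul1r.
Qed.

Lemma normal_prob01_abs_lty : (\int[normal_prob 0 1]_x (`|x : R|)%:E < +oo)%E.
Proof.
rewrite ge0_integral_normal_prob //; last first.
  by apply/measurable_EFinP; exact: normr_measurable.
(* |x| times the N(0,1) density is dominated by a multiple of the N(0,2) density. *)
pose s : R := Num.sqrt 2.
have s0 : s != 0 by rewrite gt_eqF // sqrtr_gt0.
have s2 : s ^+ 2 *+ 2 = 4 by rewrite sqr_sqrtr //; lra.
pose K := normal_peak 1 / normal_peak s.
have K0 : 0 <= K by rewrite divr_ge0 ?normal_peak_ge0.
apply: (@le_lt_trans _ _ (\int[mu]_x (K * normal_pdf 0 s x)%:E))%E.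
  apply: ge0_le_integral => //.
  - by move=> x _; rewrite mule_ge0 // lee_fin normal_pdf_ge0.
  - apply: emeasurable_funM; first by apply/measurable_EFinP; exact: normr_measurable.
    by apply/measurable_EFinP; exact: measurable_normal_pdf.
  - by apply/measurable_EFinP/measurable_funM => //; exact: measurable_normal_pdf.
  move=> x _; rewrite -EFinM lee_fin !normal_pdf0E ?oner_neq0 // s2.
  rewrite expr1n mulrCA /K -mulrA ler_wpM2l ?normal_peak_ge0 //.
  rewrite mulrA mulVf ?gt_eqF ?normal_peak_gt0 // mul1r.
  exact: normr_mul_expR_sqr_le.
under eq_integral do rewrite EFinM.
rewrite integralZl //; last exact: integrable_normal_pdf.
by rewrite integral_normal_pdf mule1 ltry.
Qed.

End normal_distribution.

(* ['rV[R]_m] carries no sigma-algebra: a copy of it is equipped with the one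
   generated by boxes, on which the law of a standard Gaussian vector is
   determined by the independence of its coordinates. *)
Definition rvec (R : realType) (m : nat) := 'rV[R]_m.
HB.instance Definition _ R m := Choice.on (rvec R m).
HB.instance Definition _ R m := isPointed.Build (rvec R m) 0.

Definition box (R : realType) (m : nat) (A : 'I_m -> set R) : set (rvec R m) :=
  [set v | forall i, A i (v 0 i)].

Definition boxes (R : realType) (m : nat) : set (set (rvec R m)) :=
  [set box A | A in [set A | forall i, measurable (A i)]].

Section boxes.
Context {R : realType} {m : nat}.
Local Notation boxT := (g_sigma_algebraType (@boxes R m)).

Lemma boxes_setI_closed : setI_closed (@boxes R m).
Proof.
move=> _ _ [A mA <-] [B mB <-]; exists (fun i => A i `&` B i).
  by move=> i; exact: measurableI.
by apply/seteqP; split => v /= vAB; [split => i; case: (vAB i)|move=> i; split; apply vAB].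
Qed.

Lemma measurable_coord (i : 'I_m) : measurable_fun setT (fun v : boxT => v 0 i).
Proof.
move=> _ B mB; rewrite setTI; apply: sub_sigma_algebra.
exists (fun j => if j == i then B else setT); first by move=> j; case: ifP.
apply/seteqP; split => v /=; first by move/(_ i); rewrite eqxx.
by move=> Bv j; case: ifP => // /eqP ->.
Qed.

Lemma preimage_box {d} {T : measurableType d} (g : 'I_m -> T -> R) (A : 'I_m -> set R) :
  (fun w => \row_i g i w : boxT) @^-1` box A = \bigcap_(i in setT) (g i @^-1` A i).
Proof.
apply/seteqP; split => w /=; first by move=> gA i _; move: (gA i); rewrite mxE.
by move=> gA i; rewrite mxE; exact: gA.
Qed.

Lemma measurable_row {d} {T : measurableType d} (g : 'I_m -> T -> R) :
  (forall i, measurable_fun setT (g i)) ->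
  measurable_fun setT (fun w => \row_i g i w : boxT).
Proof.
move=> mg; apply: (@measurability _ _ _ boxT setT _ (@boxes R m)) => //.
move=> _ [_ [A mA <-] <-]; rewrite setTI preimage_box.
apply: fin_bigcap_measurable; first exact: finite_finset.
by move=> i _; rewrite -[X in measurable X]setTI; exact: mg.
Qed.

End boxes.

Section std_gaussian_vector.
Context {d : measure_display} {T : measurableType d} {R : realType}.
Variables (P : probability T R) (m : nat) (xi : 'I_m -> T -> R).
Hypothesis gauss : std_gaussian_vector P xi.
Local Notation boxT := (g_sigma_algebraType (@boxes R m)).

Lemma measurable_gauss i : measurable_fun setT (xi i).
Proof. by case: gauss. Qed.

Lemma integrableR_gauss i : P.-integrable setT (EFin \o xi i).
Proof.
have [_ law _] := gauss.
apply/integrableP; split; first exact/measurable_EFinP/measurable_gauss.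
pose xi' : T -> measurableTypeR R := xi i.
have mxi' : measurable_fun setT xi' := measurable_gauss i.
pose nabs : measurableTypeR R -> \bar R := fun y => (`|y|)%:E.
have mnabs : measurable_fun setT nabs by apply/measurable_EFinP; exact: normr_measurable.
rewrite -[X in (X < _)%E]/(\int[P]_(w in xi' @^-1` setT) (nabs \o xi') w)%E.
rewrite -(ge0_integral_pushforward mxi') //; last by move=> y _; rewrite lee_fin.
rewrite (eq_measure_integral (normal_prob 0 1)); first exact: normal_prob01_abs_lty.
by move=> A mA _; exact: law.
Qed.

Lemma measurable_bigcap_gauss (A : 'I_m -> set R) : (forall i, measurable (A i)) ->
  measurable (\bigcap_(i in setT) (xi i @^-1` A i)).
Proof.
move=> mA; apply: fin_bigcap_measurable; first exact: finite_finset.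
by move=> i _; rewrite -[X in measurable X]setTI; exact: measurable_gauss.
Qed.

Lemma prob_bigcap_gauss (A : 'I_m -> set R) : (forall i, measurable (A i)) ->
  P (\bigcap_(i in setT) (xi i @^-1` A i)) =
  (\prod_(i < m) fine (normal_prob 0 1 (A i)))%:E.
Proof.
move=> mA; have [_ law indep] := gauss; have mI := measurable_bigcap_gauss mA.
rewrite -[LHS]fineK ?fin_num_measure // indep //.
by congr EFin; apply: eq_bigr => i _; rewrite law.
Qed.

Definition gauss_row (w : T) : boxT := \row_i xi i w.
Definition gauss_row_opp (w : T) : boxT := \row_i - xi i w.

Lemma measurable_gauss_row : measurable_fun setT gauss_row.
Proof. exact: measurable_row measurable_gauss. Qed.

Lemma measurable_gauss_row_opp : measurable_fun setT gauss_row_opp.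
Proof.
apply: measurable_row => i; apply: measurableT_comp; last exact: measurable_gauss.
exact: oppr_measurable.
Qed.

Lemma prob_gauss_row_opp (B : set boxT) : measurable B ->
  P (gauss_row_opp @^-1` B) = P (gauss_row @^-1` B).
Proof.
pose law_opp := distribution P (HB.pack gauss_row_opp
  (isMeasurableFun.Build _ _ _ _ _ measurable_gauss_row_opp) : {mfun T >-> boxT}).
pose law := distribution P (HB.pack gauss_row
  (isMeasurableFun.Build _ _ _ _ _ measurable_gauss_row) : {mfun T >-> boxT}).
move=> mB; apply: (@measure_unique _ R boxT (@boxes R m) (fun=> setT) erefl
  boxes_setI_closed _ _ law_opp law _ _ B mB).
- by move=> _; exists (fun=> setT) => //; apply/seteqP; split.
- by apply/seteqP; split => // v _; exists 0%N.
- move=> _ [A mA <-].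
  change (P (gauss_row_opp @^-1` box A) = P (gauss_row @^-1` box A)).
  have -> : gauss_row_opp @^-1` box A =
      \bigcap_(i in setT) (xi i @^-1` [set x | A i (- x)]).
    exact: (preimage_box (fun i w => - xi i w)).
  have -> : gauss_row @^-1` box A = \bigcap_(i in setT) (xi i @^-1` A i).
    exact: preimage_box.
  rewrite (prob_bigcap_gauss (A := fun i => [set x | A i (- x)])); last first.
    by move=> i; rewrite -[X in measurable X]setTI; exact: oppr_measurable.
  rewrite prob_bigcap_gauss //; congr EFin; apply: eq_bigr => i _.
  by rewrite normal_prob0N ?oner_neq0.
- move=> _; change (P (gauss_row_opp @^-1` setT) < +oo)%E.
  by rewrite preimage_setT probability_setT ltry.
Qed.

Lemma ge0_integral_gauss_row_opp (f : boxT -> \bar R) :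
  measurable_fun setT f -> (forall v, (0 <= f v)%E) ->
  (\int[P]_w f (gauss_row_opp w) = \int[P]_w f (gauss_row w))%E.
Proof.
move=> mf f0.
rewrite -[LHS]/(\int[P]_(w in gauss_row_opp @^-1` setT) (f \o gauss_row_opp) w)%E.
rewrite -[RHS]/(\int[P]_(w in gauss_row @^-1` setT) (f \o gauss_row) w)%E.
have f0' : {in setT, forall v, (0 <= f v)%E} by move=> v _; exact: f0.
rewrite -(ge0_integral_pushforward measurable_gauss_row_opp) //.
rewrite -(ge0_integral_pushforward measurable_gauss_row) //.
apply: eq_measure_integral => [||? ? B mB _].
- exact: measurable_gauss_row.
- exact: measurable_gauss_row_opp.
- exact: prob_gauss_row_opp.
Qed.

Lemma mean_abs_shift_gauss_even u b :
  mean_abs_shift P (fun w => dotv u (gauss_row w)) (- b) =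
  mean_abs_shift P (fun w => dotv u (gauss_row w)) b.
Proof.
rewrite /mean_abs_shift /Rintegral; congr fine.
pose f : boxT -> \bar R := fun v => (`|b + dotv u v|)%:E.
have mf : measurable_fun setT f.
  apply/measurable_EFinP; apply: measurableT_comp; first exact: normr_measurable.
  apply: measurable_funD => //; apply: measurable_sum => i.
  by apply: measurable_funM => //; exact: measurable_coord.
rewrite -(ge0_integral_gauss_row_opp mf) => [|v]; last by rewrite lee_fin.
apply: eq_integral => w _; rewrite /f /= -normrN opprD opprK.
have -> : gauss_row_opp w = - gauss_row w by apply/rowP => i; rewrite !mxE.
by rewrite dotvNr.
Qed.

Lemma prob_gauss_small_gt0 (e : R) : 0 < e ->
  0 < fine (P (\bigcap_(i in setT) (xi i @^-1` `](- e), e[))).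
Proof.
move=> e0; rewrite prob_bigcap_gauss /=; last by move=> i; exact: measurable_itv.
apply: prodr_gt0 => i _; apply: fine_gt0; rewrite normal_prob01_itv_gt0 //=.
apply: le_lt_trans (probability_le1 (normal_prob 0 1) (measurable_itv _)) _.
exact: ltey.
Qed.

End std_gaussian_vector.

Section gaussian_zonoid.
Context {d : measure_display} {T : measurableType d} {R : realType}.
Variables (P : probability T R) (m : nat) (xi : 'I_m -> T -> R).
Hypothesis gauss : std_gaussian_vector P xi.
Local Notation M u := (mean_abs_shift P (fun w => dotv u (gauss_row xi w))).

Lemma integrableR_Gzon_coord (c : 'rV[R]_m) i :
  P.-integrable setT (EFin \o fun w => (c + \row_j xi j w) 0 i).
Proof.
have := integrableR_add (integrableR_cst P (c 0 i)) (integrableR_gauss gauss i).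
by apply: eq_integrable => // w _ /=; rewrite !mxE.
Qed.

Lemma integrableR_dotv_gauss u :
  P.-integrable setT (EFin \o fun w => dotv u (gauss_row xi w)).
Proof.
apply: integrableR_dotv => i.
by apply: eq_integrable (integrableR_gauss gauss i) => // w _ /=; rewrite mxE.
Qed.

Lemma vitale_support_Gzon c u :
  vitale_support P (fun w => c + \row_i xi i w) u = (2^-1 * M u (dotv u c))%:E.
Proof.
rewrite vitale_supportE; last exact: integrableR_Gzon_coord.
by congr (_ * _)%:E; apply: eq_Rintegral => w _; rewrite dotvDr.
Qed.

Lemma mem_Gzon c x : Gzon P xi c x <-> forall u, dotv u x <= 2^-1 * M u (dotv u c).
Proof. by split => Gx u; have := Gx u; rewrite vitale_support_Gzon lee_fin. Qed.

Lemma support_fun_Gzon c u : support_fun (Gzon P xi c) u = (2^-1 * M u (dotv u c))%:E.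
Proof.
rewrite support_fun_vitale_zonoid ?vitale_support_Gzon //.
exact: integrableR_Gzon_coord.
Qed.

Lemma Gzon_supporting_point c u :
  exists2 x, Gzon P xi c x & dotv u x = 2^-1 * M u (dotv u c).
Proof.
have [x Gx ux] := vitale_zonoid_supporting_point (integrableR_Gzon_coord c) u.
exists x => //; apply/EFin_inj; rewrite -vitale_support_Gzon vitale_supportE ?ux //.
exact: integrableR_Gzon_coord.
Qed.

Lemma hausdorff_dist_Gzon_le c c' :
  (hausdorff_dist (Gzon P xi c') (Gzon P xi c) <=
    (2^-1 * (m%:R * enorm (c' - c)))%:E)%E.
Proof.
apply: ge_ereal_sup => _ [u u1 <-]; rewrite !support_fun_Gzon -EFinB lee_fin.
rewrite -mulrBr normrM ger0_norm // ler_wpM2l //.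
apply: le_trans (mean_abs_shift_lipschitz (integrableR_dotv_gauss u) _ _) _.
by rewrite -dotvBr; apply: le_trans (normr_dotv_le _ _) _; rewrite u1 mul1r.
Qed.

Lemma mean_abs_shift_gauss_gap u (l q : R) (A : set T) :
  0 <= l <= 1 -> measurable A ->
  (forall w, A w -> `|dotv u (gauss_row xi w)| <= l * q) ->
  M u (l * q) + (1 - l) ^+ 2 * q * fine (P A) <= M u q.
Proof.
move=> l01 mA YA.
have := mean_abs_shift_convex_gap (integrableR_dotv_gauss u) l01 mA YA.
by rewrite mean_abs_shift_gauss_even // -mulrDl -mulrDl addrACA subrr addr0 divff // mul1r.
Qed.

Lemma Gzon_scale_subset c (s t : R) : 0 <= s -> s <= t ->
  Gzon P xi (s *: c) `<=` Gzon P xi (t *: c).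
Proof.
move=> s0 st x /mem_Gzon Gx; apply/mem_Gzon => u; apply: le_trans (Gx u) _.
rewrite !dotvZr ler_wpM2l //.
have [t0|t0] := eqVneq t 0; first by have -> : s = t by apply/eqP; rewrite eq_le st t0 s0.
have {}t0 : 0 < t by rewrite lt_def t0 (le_trans s0 st).
have l01 : 0 <= s / t <= 1 by rewrite divr_ge0 ?ler_pdivrMr ?mul1r // ltW.
have := mean_abs_shift_gauss_gap (u := u) (q := t * dotv u c) l01 measurable0
  (fun=> False_ind _).
by rewrite measure0 mulr0 addr0 mulrA divfK ?gt_eqF.
Qed.

Lemma Gzon_scale_not_supset c (s t : R) : c != 0 -> 0 < s -> s < t ->
  ~ (Gzon P xi (t *: c) `<=` Gzon P xi (s *: c)).
Proof.
move=> c0 s0 st tsub; have t0 : 0 < t := lt_trans s0 st.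
set a := dotv c c; have a0 : 0 < a := dotvv_gt0 c0.
have sa0 : 0 < s * a := mulr_gt0 s0 a0.
pose S := \sum_(i < m) `|c 0 i|; have S0 : 0 <= S by rewrite sumr_ge0.
(* Small enough that |<c, xi>| <= s <c, c> on the event A below. *)
pose e := s * a / (S + 1); have e0 : 0 < e by rewrite divr_gt0 //; lra.
pose A := \bigcap_(i in setT) (xi i @^-1` `](- e), e[).
have mA : measurable A.
  by apply: (measurable_bigcap_gauss gauss) => i; exact: measurable_itv.
have YA w : A w -> `|dotv c (gauss_row xi w)| <= s / t * (t * a).
  move=> Aw; rewrite mulrA divfK ?gt_eqF //.
  have : `|dotv c (gauss_row xi w)| <= S * e.
    apply: normr_dotv_le_sum => i; have := Aw i I.
    by rewrite /= mxE in_itv /= ler_norml => /andP[? ?]; apply/andP; split; apply: ltW.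
  by move/le_trans; apply; rewrite /e mulrA ler_pdivrMr; [nra|lra].
have l01 : 0 <= s / t <= 1.
  by rewrite divr_ge0 ?ler_pdivrMr ?mul1r ?ltW.
have := mean_abs_shift_gauss_gap l01 mA YA; rewrite mulrA divfK ?gt_eqF // => gap.
have [x Gx cx] := Gzon_supporting_point (t *: c) c.
have := (mem_Gzon _ x).1 (tsub x Gx) c; rewrite cx !dotvZr -/a => le_ts.
have : 0 < (1 - s / t) ^+ 2 * (t * a) * fine (P A).
  rewrite !mulr_gt0 ?exprn_gt0 ?subr_gt0 ?ltr_pdivrMr ?mul1r //.
  exact: prob_gauss_small_gt0.
lra.
Qed.

End gaussian_zonoid.

Theorem proposition2p9 (R : realType) (d : measure_display) (T : measurableType d)
    (P : probability T R) (m : nat) (xi : 'I_m -> T -> R) :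
  std_gaussian_vector P xi ->
  (forall c : 'rV[R]_m, forall eps : R, 0 < eps ->
     exists2 delta : R, 0 < delta &
       forall c' : 'rV[R]_m, enorm (c' - c) < delta ->
         (hausdorff_dist (Gzon P xi c') (Gzon P xi c) <= eps%:E)%E) /\
  (forall c : 'rV[R]_m, c != 0 ->
     forall s t : R, 0 < s -> s < t ->
       Gzon P xi (s *: c) `<` Gzon P xi (t *: c)).
Proof.
move=> gauss; split.
- move=> c eps eps0; have m0 : (0 : R) <= m%:R := ler0n _ _.
  exists (eps / (m%:R + 1)) => [|c' cc']; first by rewrite divr_gt0 //; lra.
  apply: le_trans (hausdorff_dist_Gzon_le gauss c c') _; rewrite lee_fin.
  have n0 : 0 <= enorm (c' - c) := sqrtr_ge0 _.
  rewrite ltr_pdivlMr in cc'; last lra.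
  nra.
- move=> c c0 s t s0 st; split; first exact: Gzon_scale_subset (ltW s0) (ltW st).
  exact: Gzon_scale_not_supset.
Qed.
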